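(* Let $s,D\in\mathbb N$, let $\mathcal G=\{G_1,\dots,G_t\}$ be a graph family, and let $\phi:\mathcal H\hookrightarrow\mathcal G$ be an $(s,D)$-good embedding of a rooted $[t]$-edge-colored graph $\mathcal H$. Suppose $h,h'$ are non-adjacent vertices of $\mathcal H$ with $\phi(h)\phi(h')\in E(G_r)$ for some $r\in[t]$. Let $\mathcal H'$ be the rooted graph obtained from $\mathcal H$ by adding an edge $hh'$ of color $r$, with root set equal to the roots of $\mathcal H$ together with $h$, $h'$ and all ancestors of $h$ and of $h'$. Then $\phi$ is an $(s,D)$-good embedding of $\mathcal H'$ into $\mathcal G$.
   Context: A graph family $\mathcal G=\{G_1,\dots,G_t\}$ is a collection of $t$ simple graphs on a common finite vertex set $V$. For $X\subseteq V\times[t]$, $\Gamma_{\mathcal G}(X)=\bigcup_{(v,i)\in X}\{u\in V:uv\in E(G_i)\}$. A $[t]$-edge-colored graph $\mathcal H$ is a simple graph with each edge colored in $[t]$; $H_i$ is its spanning subgraph of color-$i$ edges and $\deg_{H_i}(h)$ the number of color-$i$ edges at $h$. An embedding $\phi:\mathcal H\hookrightarrow\mathcal G$ is an injective map $V(\mathcal H)\to V$ with $\phi(x)\phi(y)\in E(G_i)$ for every edge $xy$ of color $i$. A rooted $[t]$-edge-colored graph is one with a distinguished set of roots such that, after deleting all edges with both ends roots, every connected component is a tree containing exactly one root; for a non-root $h$ the unique path from $h$ to the root set (meeting it only at its last vertex) determines the parent of $h$ (its neighbour on the path), its ancestors (the other vertices of the path), and $c(h)$, the color of the edge from $h$ to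 its parent. For fixed $D$: $P_\phi(\mathcal H)=\{(\phi(h),c(h)):h\text{ non-root}\}$ and, for $X\subseteq V\times[t]$, $R(X,\phi)=|\Gamma_{\mathcal G}(X)\setminus\phi(V(\mathcal H))|-\sum_{(v,i)\in X}[D-\deg_{H_i}(\phi^{-1}(v))]-|P_\phi(\mathcal H)\cap X|$, with $\deg_{H_i}(\phi^{-1}(v))=0$ if $v\notin\phi(V(\mathcal H))$. The embedding $\phi$ is $(s,D)$-good if $R(X,\phi)\ge0$ for every $X\subseteq V\times[t]$ with $|X|\le s$. *)

From HB Require Import structures.
From mathcomp Require Import all_boot all_order all_algebra.
From Stdlib Require Import ClassicalEpsilon.
Set Implicit Arguments. Unset Strict Implicit. Unset Printing Implicit Defensive.
Import Order.TTheory GRing.Theory Num.Theory.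

Definition asb (P : Prop) : bool :=
  if excluded_middle_informative P then true else false.

Section Defs.
Variables (V W : finType) (t : nat).

Definition graph_family (G : 'I_t -> rel V) : Prop :=
  (forall i x, ~~ G i x x) /\ (forall i x y, G i x y = G i y x).

(* A [t]-edge-coloured simple graph on W: col x y = Some i iff xy is an
   edge of colour i; col x y = None iff x,y non-adjacent. *)
Definition colored_graph (col : W -> W -> option 'I_t) : Prop :=
  (forall x, col x x = None) /\ (forall x y, col x y = col y x).

Definition hadj (col : W -> W -> option 'I_t) : rel W :=
  fun x y => col x y != None.

Definition hdeg (col : W -> W -> option 'I_t) (i : 'I_t) (w : W) : nat :=
  #|[set u | col w u == Some i]|.

Definition forest_rel (col : W -> W -> option 'I_t) (roots : {set W}) : rel W :=
  fun x y => hadj col x y && ~~ ((x \in roots) && (y \in roots)).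

Definition acyclic (e : rel W) : Prop :=
  forall p : seq W, uniq p -> 3 <= size p -> ~~ cycle e p.

(* Rooted: after deleting root-root edges, every connected component is a
   tree (connected + acyclic) containing exactly one root. *)
Definition rooted (col : W -> W -> option 'I_t) (roots : {set W}) : Prop :=
  acyclic (forest_rel col roots) /\
  forall x, #|[set r in roots | connect (forest_rel col roots) x r]| = 1.

Definition root_path (col : W -> W -> option 'I_t) (roots : {set W})
    (h : W) (p : seq W) : bool :=
  [&& p != [::], path (hadj col) h p, uniq (h :: p),
      last h p \in roots & all (fun v => v \notin roots) (belast h p)].

Definition ancestors (col : W -> W -> option 'I_t) (roots : {set W}) (h : W)
  : {set W} :=
  [set a | asb (exists p, root_path col roots h p /\ a \in p)].

Definition add_edge (col : W -> W -> option 'I_t) (h h' : W) (r : 'I_t) :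
  W -> W -> option 'I_t :=
  fun x y => if ((x == h) && (y == h')) || ((x == h') && (y == h))
             then Some r else col x y.

Definition embedding (G : 'I_t -> rel V) (col : W -> W -> option 'I_t)
    (phi : W -> V) : Prop :=
  injective phi /\ forall x y i, col x y = Some i -> G i (phi x) (phi y).

Definition Pset (col : W -> W -> option 'I_t) (roots : {set W})
    (phi : W -> V) : {set V * 'I_t} :=
  [set vc | asb (exists h p, h \notin roots /\ root_path col roots h p /\
                  phi h = vc.1 /\ col h (head h p) = Some vc.2)].

Definition Gamma (G : 'I_t -> rel V) (X : {set V * 'I_t}) : {set V} :=
  [set u | [exists x in X, G x.2 x.1 u]].

(* deg_{H_i}(phi^{-1}(v)), = 0 if v not in the image of phi *)
Definition degpre (col : W -> W -> option 'I_t) (phi : W -> V) (v : V)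
    (i : 'I_t) : nat :=
  \sum_(w | phi w == v) hdeg col i w.

Local Open Scope ring_scope.

Definition Rval (G : 'I_t -> rel V) (col : W -> W -> option 'I_t)
    (roots : {set W}) (phi : W -> V) (D : nat) (X : {set V * 'I_t}) : int :=
  (#|Gamma G X :\: (phi @: [set: W])|%:Z)
  - (\sum_(x in X) ((D%:Z) - (degpre col phi x.1 x.2)%:Z))
  - (#|Pset col roots phi :&: X|%:Z).

Definition good_embedding (G : 'I_t -> rel V) (col : W -> W -> option 'I_t)
    (roots : {set W}) (phi : W -> V) (s D : nat) : Prop :=
  embedding G col phi /\
  forall X : {set V * 'I_t}, (#|X| <= s)%N -> 0 <= Rval G col roots phi D X.

End Defs.

(* Adding the edge hh' and promoting h, h' and their ancestors to roots only
   shrinks the forest left after deleting root-root edges.  A non-root of the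
   new graph keeps its old root path (cut at the first new root and continued
   inside the new roots), so the set P can only lose pairs while the degrees
   can only grow; hence R(X, phi) does not decrease.  Each new root reaches an
   old root through new roots, so two new roots connected in the new forest
   would close a cycle in the old one: one arc through the new roots, the
   other avoiding them. *)

From mathcomp Require Import all_boot all_order all_algebra.
From Stdlib Require Import ClassicalEpsilon.
Set Implicit Arguments. Unset Strict Implicit. Unset Printing Implicit Defensive.
Import Num.Theory.

Lemma asbP (P : Prop) : reflect P (asb P).
Proof.
by rewrite /asb; case: excluded_middle_informative => ?; constructor.
Qed.

Section Paths.
Variable T : eqType.
Implicit Types (e : rel T) (P : pred T) (x : T) (p : seq T).

Lemma sub_belast_path e e' P x p :
  (forall u v, P u -> e u v -> e' u v) -> all P (belast x p) ->
  path e x p -> path e' x p.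
Proof.
move=> ee'; elim: p x => [|y p IHp] x //= /andP[Px Pp] /andP[exy e_p].
by rewrite (ee' _ _ Px exy) (IHp _ Pp e_p).
Qed.

Lemma path_first_hit e P x p :
  path e x p -> P (last x p) -> ~~ P x ->
  exists q r, [/\ p = q ++ r, q != [::], path e x q, P (last x q)
                & all (predC P) (belast x q)].
Proof.
elim: p x => [|y p IHp] x /=; first by move=> _ ->.
case/andP=> exy e_p Plast nPx; case Py: (P y).
  by exists [:: y], p; rewrite /= exy Py nPx.
have [q [r [-> _ e_q Pq nPq]]] := IHp y e_p Plast (negbT Py).
by exists (y :: q), r; rewrite /= exy e_q Pq nPx nPq.
Qed.

End Paths.

(* The cycle is b :: q ++ (y :: p minus its endpoint b); [S] separates the
   two arcs, which makes it simple. *)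
Lemma acyclic_detour (W : finType) (e : rel W) (S : pred W) b q y p :
  acyclic e ->
  path e b q -> q != [::] -> uniq (b :: q) -> all S (b :: q) ->
  path e (last b q) (y :: p) -> p != [::] -> last y p = b -> uniq (y :: p) ->
  all (predC S) (belast y p) -> False.
Proof.
move=> acyc e_q q0 uq Sq e_p p0 lp up nSp.
have ub : uniq (belast y p) by move: up; rewrite lastI rcons_uniq => /andP[].
apply: negP (acyc (b :: q ++ belast y p) _ _) _.
- rewrite -cat_cons cat_uniq uq ub andbT; apply/hasPn => z /(allP nSp) nSz.
  by apply: contra nSz => /(allP Sq).
- rewrite /= size_cat size_belast ltnS.
  rewrite -size_eq0 -lt0n in q0; rewrite -size_eq0 -lt0n in p0.
  exact: leq_add q0 p0.
- by rewrite [cycle _ _]/= rcons_cat cat_path e_q -[X in rcons _ X]lp -lastI.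
Qed.

Definition root_walk (W : finType) (t : nat) (col : W -> W -> option 'I_t)
    (roots : {set W}) (y : W) (q : seq W) : bool :=
  [&& path (hadj col) y q, uniq (y :: q), last y q \in roots
    & all (fun v => v \notin roots) (belast y q)].

Section Rooted.
Variables (W : finType) (t : nat) (col : W -> W -> option 'I_t).
Variable roots : {set W}.
Hypothesis col_sym : forall x y, col x y = col y x.
Hypothesis col_rooted : rooted col roots.
Local Notation F := (forest_rel col roots).

Lemma root_pathE y q :
  root_path col roots y q = (q != [::]) && root_walk col roots y q.
Proof. by []. Qed.

Lemma forest_rel_sym : symmetric F.
Proof.
move=> x y; rewrite /forest_rel /hadj col_sym.
by case: (x \in roots); case: (y \in roots).
Qed.

Lemma forest_rel_nonroot u v : u \notin roots -> hadj col u v -> F u v.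
Proof. by rewrite /forest_rel => /negbTE -> ->. Qed.

Lemma root_walk_nil y : y \in roots -> root_walk col roots y [::].
Proof. by rewrite /root_walk /= => ->. Qed.

Lemma connect_root_exists x : exists2 rho, rho \in roots & connect F x rho.
Proof.
have /eqP/cards1P[rho def_rho] := col_rooted.2 x.
have : rho \in [set r in roots | connect F x r] by rewrite def_rho set11.
by rewrite inE => /andP[]; exists rho.
Qed.

Lemma connect_root_unique x a b : a \in roots -> b \in roots ->
  connect F x a -> connect F x b -> a = b.
Proof.
move=> aR bR xa xb; have /eqP/cards1P[rho def_rho] := col_rooted.2 x.
have : a \in [set r in roots | connect F x r] by rewrite inE aR xa.
have : b \in [set r in roots | connect F x r] by rewrite inE bR xb.
by rewrite def_rho !inE => /eqP-> /eqP->.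
Qed.

Lemma root_walk_forest y q : root_walk col roots y q -> path F y q.
Proof.
case/and4P=> y_q _ _ nRq.
by apply: sub_belast_path nRq y_q => u v; apply: forest_rel_nonroot.
Qed.

Lemma root_walk_exists y : exists q, root_walk col roots y q.
Proof.
case yR: (y \in roots); first by exists [::]; apply: root_walk_nil.
have [rho rhoR /connectP[p0 F_p0 def_rho]] := connect_root_exists y.
move: rhoR; rewrite def_rho; case: (shortenP F_p0) => p F_p up _ lR.
have [q [r [def_p _ F_q lq nRq]]] := path_first_hit F_p lR (negbT yR).
exists q; apply/and4P; split => //.
- by apply: sub_path F_q => u v /andP[].
- by move: up; rewrite def_p -cat_cons cat_uniq => /andP[].
Qed.

Lemma root_walk_ancestors g :
  exists2 q, root_walk col roots g q & {subset q <= ancestors col roots g}.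
Proof.
case gR: (g \in roots); first by exists [::] => //; apply: root_walk_nil.
have [q wq] := root_walk_exists g; exists q => // z zq.
rewrite inE; apply/asbP; exists q; split => //; rewrite root_pathE wq andbT.
by apply: contraFN gR => /eqP q0; case/and4P: wq; rewrite q0.
Qed.

Lemma ancestor_root_walk g y : y \in ancestors col roots g ->
  exists2 q, root_walk col roots y q & {subset q <= ancestors col roots g}.
Proof.
rewrite inE => /asbP[p [rp yp]]; case/splitPr: yp rp => p1 p2 rp.
exists p2; last first.
  by move=> z zp2; rewrite inE; apply/asbP; exists (p1 ++ y :: p2);
    rewrite mem_cat inE zp2 !orbT.
case/and5P: rp => _ g_p up lR nRp; apply/and4P; split.
- by move: g_p; rewrite cat_path => /andP[_ /andP[]].
- by move: up; rewrite -cat_cons cat_uniq => /and3P[].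
- by rewrite last_cat in lR.
- by move: nRp; rewrite belast_cat all_cat => /andP[_ /andP[]].
Qed.

Lemma root_walk_in_ancestors g y : (y == g) || (y \in ancestors col roots g) ->
  exists2 q, root_walk col roots y q & {subset q <= ancestors col roots g}.
Proof.
case/orP=> [/eqP-> | yg]; first exact: root_walk_ancestors.
exact: ancestor_root_walk.
Qed.

Lemma root_walk_cat x p q :
  path (hadj col) x p -> uniq (x :: p) ->
  all (fun v => v \notin roots) (belast x p) ->
  root_walk col roots (last x p) q -> all (fun z => z \notin q) (belast x p) ->
  root_walk col roots x (p ++ q).
Proof.
move=> x_p up nRp /and4P[l_q]; rewrite cons_uniq => /andP[lq uq] lR nRq pq.
apply/and4P; split.
- by rewrite cat_path x_p.
- rewrite -cat_cons cat_uniq up uq andbT; apply/hasPn => z zq.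
  rewrite lastI mem_rcons inE negb_or; apply/andP; split.
    by apply: contraNneq lq => <-.
  by apply/negP => /(allP pq); rewrite zq.
- by rewrite last_cat.
- by rewrite belast_cat all_cat nRp.
Qed.

End Rooted.

Section RootExtension.
Variables (W : finType) (t : nat) (col col' : W -> W -> option 'I_t).
Variables roots roots' : {set W}.
Hypothesis col_sym : forall x y, col x y = col y x.
Hypothesis col'_sym : forall x y, col' x y = col' y x.
Hypothesis col_rooted : rooted col roots.
Hypothesis roots_sub : roots \subset roots'.
Hypothesis col'_out : forall u v, u \notin roots' -> col' u v = col u v.
Hypothesis roots'_walk : forall y, y \in roots' ->
  exists2 q, root_walk col roots y q & all [in roots'] q.

Local Notation F := (forest_rel col roots).
Local Notation F' := (forest_rel col' roots').
Local Notation F_in := [rel u v | [&& F u v, u \in roots' & v \in roots']].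

Lemma nonroot'_nonroot u : u \notin roots' -> u \notin roots.
Proof. exact/contra/subsetP. Qed.

Lemma forest_ext_sub : subrel F' F.
Proof.
move=> u v /andP[e_uv]; rewrite negb_and => /orP[uR | vR].
  apply: forest_rel_nonroot (nonroot'_nonroot uR) _.
  by rewrite /hadj -col'_out.
rewrite forest_rel_sym //; apply: forest_rel_nonroot (nonroot'_nonroot vR) _.
by rewrite /hadj -col'_out // col'_sym.
Qed.

Lemma forest_ext_out u v : u \notin roots' -> F u v -> F' u v.
Proof.
move=> uR /andP[e_uv _]; rewrite /forest_rel (negbTE uR) andbT.
by rewrite /hadj col'_out.
Qed.

Lemma acyclic_forest_ext : acyclic F'.
Proof.
move=> p up sp; apply: contra _ (col_rooted.1 p up sp).
exact: (sub_cycle forest_ext_sub).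
Qed.

Lemma connect_root'_exists x : exists2 a, a \in roots' & connect F' x a.
Proof.
case xR: (x \in roots'); first by exists x.
have [rho rhoR /connectP[p F_p def_rho]] := connect_root_exists col_rooted x.
have lR : last x p \in roots' by rewrite -def_rho (subsetP roots_sub).
have [q [_ [_ _ F_q lq nRq]]] := path_first_hit F_p lR (negbT xR).
exists (last x q) => //; apply/connectP; exists q => //.
by apply: sub_belast_path nRq F_q => u v; apply: forest_ext_out.
Qed.

Lemma forest_in_sym : symmetric F_in.
Proof.
move=> u v /=; rewrite forest_rel_sym //.
by case: (u \in roots'); case: (v \in roots'); rewrite ?andbF.
Qed.

Lemma path_forest_in x s :
  x \in roots' -> path F_in x s = path F x s && all [in roots'] s.
Proof.
elim: s x => //= y s IHs x xR; rewrite xR.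
case yR: (y \in roots'); last by rewrite !andbF.
by rewrite IHs // !andbT andbA.
Qed.

Lemma connect_forest_in : subrel (connect F_in) (connect F).
Proof. by apply: connect_sub => u v /andP[F_uv _]; apply: connect1. Qed.

Lemma connect_forest_in_root u :
  u \in roots' -> exists2 rho, rho \in roots & connect F_in u rho.
Proof.
move=> uR; have [q wq Rq] := roots'_walk uR.
exists (last u q); first by case/and4P: wq.
by apply/connectP; exists q => //; rewrite path_forest_in // root_walk_forest.
Qed.

(* A shortest F'-path between two distinct vertices of roots' leaves roots'
   at once and returns to it; its first return is the detour below. *)
Lemma forest_ext_detour a b : a \in roots' -> b \in roots' -> a != b ->
  connect F' a b ->
  exists y q, [/\ path F a (y :: q), q != [::], uniq (y :: q),
    last y q \in roots' :\ a & all (predC [in roots']) (belast y q)].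
Proof.
move=> aR bR nab /connectP[p0 F_p0 def_b]; move: bR nab; rewrite def_b.
case: (shortenP F_p0) => -[_ _ _ _ /=|y p]; first by rewrite eqxx.
move=> /andP[F'ay F'_p] up _ {p0 F_p0 def_b} /= bR _.
have yR : y \notin roots'.
  by apply: contraTN F'ay => yR; rewrite /forest_rel aR yR andbF.
have [q [r [def_p _ F'_q lq nRq]]] := path_first_hit F'_p bR yR.
have uyq : uniq (a :: y :: q).
  by move: up; rewrite def_p -!cat_cons cat_uniq => /andP[].
exists y, q; split => //.
- by rewrite (forest_ext_sub F'ay) (sub_path forest_ext_sub F'_q).
- by apply: contraNneq yR => q0; rewrite q0 in lq.
- by case/andP: uyq.
- apply/setD1P; split; last exact: lq.
  by apply: contraTneq uyq => <-; rewrite /= mem_last.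
Qed.

Lemma connect_root'_unique x a b : a \in roots' -> b \in roots' ->
  connect F' x a -> connect F' x b -> a = b.
Proof.
move=> aR bR xa xb; have [//|nab] := eqVneq a b; exfalso.
have ab : connect F' a b.
  apply: connect_trans xb.
  by rewrite (sym_connect_sym (forest_rel_sym roots' col'_sym)).
have [y [q [F_aq q0 uq]]] := forest_ext_detour aR bR nab ab.
set b' := last y q; rewrite in_setD1 => /andP[nb'a b'R] nRq.
have [rho rhoR a_rho] := connect_forest_in_root aR.
have [rho' rho'R b'_rho'] := connect_forest_in_root b'R.
have eq_rho : rho' = rho.
  apply: (connect_root_unique col_rooted) rho'R rhoR _
    (connect_forest_in a_rho).
  apply: connect_trans (connect_forest_in b'_rho').
  by apply/connectP; exists (y :: q).
have /connectP[q0' F_q0' def_a] : connect F_in b' a.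
  by rewrite (connect_trans b'_rho') // eq_rho (sym_connect_sym forest_in_sym).
case: (shortenP F_q0') def_a => q1 F_q1 uq1 _ def_a {q0' F_q0'}.
rewrite path_forest_in // in F_q1; case/andP: F_q1 => F_q1 Rq1.
apply: (acyclic_detour (S := [in roots']) _ F_q1 _ uq1 _ _ q0 erefl uq nRq).
- exact: col_rooted.1.
- by apply: contraNneq nb'a => q1_0; rewrite def_a q1_0.
- by rewrite /= b'R.
- by rewrite -def_a.
Qed.

Lemma rooted_extension : rooted col' roots'.
Proof.
split; first exact: acyclic_forest_ext.
move=> x; have [a aR xa] := connect_root'_exists x.
apply/eqP/cards1P; exists a; apply/setP => z; rewrite !inE.
apply/andP/eqP => [[zR xz]|->] //; exact: connect_root'_unique xz xa.
Qed.

Lemma root_path_extension x p : x \notin roots' ->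
  root_path col' roots' x p ->
  exists2 q, root_path col roots x q & head x q = head x p.
Proof.
move=> xR /and5P[p0 x_p up lR nRp].
have col_p : path (hadj col) x p.
  by apply: sub_belast_path nRp x_p => u v uR; rewrite /hadj col'_out.
have [q wq Rq] := roots'_walk lR.
exists (p ++ q); last by case: (p) p0.
rewrite root_pathE; apply/andP; split; first by case: (p) p0.
apply: root_walk_cat col_p up (sub_all nonroot'_nonroot nRp) wq _.
by apply: sub_all nRp => z; apply: contra => /(allP Rq).
Qed.

Lemma Pset_extension (V : finType) (phi : W -> V) :
  Pset col' roots' phi \subset Pset col roots phi.
Proof.
apply/subsetP => vc; rewrite !inE => /asbP[x [p [xR [rp [phix cx]]]]].
have [q rq hq] := root_path_extension xR rp.
apply/asbP; exists x, q; split; first exact: nonroot'_nonroot.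
by rewrite hq -col'_out.
Qed.

End RootExtension.

Section AddEdge.
Variables (W : finType) (t : nat) (col : W -> W -> option 'I_t).
Variables (h h' : W) (r : 'I_t).
Hypothesis col_sym : forall x y, col x y = col y x.
Hypothesis col_hh' : col h h' = None.
Local Notation col' := (add_edge col h h' r).

Lemma add_edge_sym x y : col' x y = col' y x.
Proof.
rewrite /add_edge col_sym.
by case: (x =P h); case: (y =P h); case: (x =P h'); case: (y =P h').
Qed.

Lemma colored_graph_add_edge :
  (forall x, col x x = None) -> h != h' -> colored_graph col'.
Proof.
move=> col_irr nhh'; split; last exact: add_edge_sym.
move=> x; rewrite /add_edge; case: ifP => [|_]; last exact: col_irr.
by case/orP=> /andP[/eqP-> /eqP eq_hh']; rewrite eq_hh' eqxx in nhh'.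
Qed.

Lemma add_edge_out u v : u \notin [set h; h'] -> col' u v = col u v.
Proof. by rewrite !inE negb_or /add_edge => /andP[/negbTE-> /negbTE->]. Qed.

Lemma hdeg_add_edge i w : (hdeg col i w <= hdeg col' i w)%N.
Proof.
apply/subset_leq_card/subsetP => u; rewrite !inE /add_edge.
case: ifP => // /orP[] /andP[/eqP-> /eqP->]; first by rewrite col_hh'.
by rewrite col_sym col_hh'.
Qed.

Lemma degpre_add_edge (V : finType) (phi : W -> V) v i :
  (degpre col phi v i <= degpre col' phi v i)%N.
Proof. by apply: leq_sum => w _; apply: hdeg_add_edge. Qed.

Lemma embedding_add_edge (V : finType) (G : 'I_t -> rel V) (phi : W -> V) :
  symmetric (G r) -> G r (phi h) (phi h') ->
  embedding G col phi -> embedding G col' phi.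
Proof.
move=> Gr_sym Gr_hh' [phi_inj phi_hom]; split=> // x y i; rewrite /add_edge.
case: ifP => [/orP[] /andP[/eqP-> /eqP->] [<-] //|_]; last exact: phi_hom.
by rewrite Gr_sym.
Qed.

End AddEdge.

Lemma ancestors_closure_walk (W : finType) (t : nat)
    (col : W -> W -> option 'I_t) (roots : {set W}) (h h' : W) :
  rooted col roots ->
  let roots' := roots :|: [set h; h'] :|: ancestors col roots h
                      :|: ancestors col roots h' in
  forall y, y \in roots' ->
  exists2 q, root_walk col roots y q & all [in roots'] q.
Proof.
move=> col_rooted roots' y; case yR: (y \in roots).
  by exists [::]; last by []; apply: root_walk_nil.
rewrite /roots' !in_setU !in_set1 yR /= -!orbA => y_roots'.
have [g gh yg] : exists2 g, g \in [set h; h'] &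
    (y == g) || (y \in ancestors col roots g).
  by case/or4P: y_roots' => H; [exists h | exists h' | exists h | exists h'];
    rewrite ?set21 ?set22 ?H ?orbT.
have [q wq anc_q] := root_walk_in_ancestors col_rooted yg.
exists q => //; apply/allP => z /anc_q z_anc.
by rewrite /roots' !in_setU; case/set2P: gh z_anc => -> ->; rewrite !orbT.
Qed.

Local Open Scope ring_scope.

Lemma Rval_le (V W : finType) (t : nat) (G : 'I_t -> rel V)
    (col col' : W -> W -> option 'I_t) (roots roots' : {set W})
    (phi : W -> V) (D : nat) (X : {set V * 'I_t}) :
  (forall v i, degpre col phi v i <= degpre col' phi v i)%N ->
  Pset col' roots' phi \subset Pset col roots phi ->
  Rval G col roots phi D X <= Rval G col' roots' phi D X.
Proof.
move=> deg_le P_sub; rewrite /Rval lerB //.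
  by rewrite lerB // ler_sum // => x _; rewrite lerB // lez_nat.
by rewrite lez_nat subset_leq_card // setSI.
Qed.

Theorem lemma2p5 (V W : finType) (t s D : nat) (G : 'I_t -> rel V)
    (col : W -> W -> option 'I_t) (roots : {set W}) (phi : W -> V)
    (h h' : W) (r : 'I_t) :
  graph_family G ->
  colored_graph col ->
  rooted col roots ->
  good_embedding G col roots phi s D ->
  col h h' = None ->
  G r (phi h) (phi h') ->
  let col' := add_edge col h h' r in
  let roots' := roots :|: [set h; h'] :|: ancestors col roots h
                      :|: ancestors col roots h' in
  [/\ colored_graph col', rooted col' roots'
    & good_embedding G col' roots' phi s D].
Proof.
move=> [G_irr G_sym] col_graph col_rooted [phi_emb phi_good] col_hh' G_hh'.
move=> col' roots'.
have nhh' : h != h'.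
  by apply: contraTneq G_hh' => eq_hh'; rewrite eq_hh' G_irr.
have roots_sub : roots \subset roots'.
  by rewrite /roots' -!setUA subsetUl.
have col'_out u v : u \notin roots' -> col' u v = col u v.
  move=> uR; apply: add_edge_out; apply: contra uR => uh.
  by apply/setUP; left; apply/setUP; left; apply/setUP; right.
have col'_sym := add_edge_sym h h' r col_graph.2.
have roots'_walk := ancestors_closure_walk (h := h) (h' := h') col_rooted.
split; first exact: colored_graph_add_edge col_graph.2 col_graph.1 nhh'.
  exact: rooted_extension col_graph.2 col'_sym col_rooted roots_sub col'_out
    roots'_walk.
split; first exact: embedding_add_edge (G_sym r) G_hh' phi_emb.
move=> X sX; apply: Order.le_trans (phi_good X sX) _.
apply: Rval_le => [v i|].
  exact (degpre_add_edge r col_graph.2 col_hh' phi v i).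
exact (Pset_extension roots_sub col'_out roots'_walk phi).
Qed.
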